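(* Let $G$ be a finite connected multigraph and let $H$ be a connected subgraph of $G$. Then $$\tau(H)\,\tau(G/\!/H)\le \tau(G).$$
   Context: For a finite connected multigraph $K$, $\tau(K)$ denotes the number of spanning trees of $K$, where a spanning tree is a subgraph of $K$ that is maximal among subgraphs without cycles. For a subgraph $H$ of $G$, $G/\!/H$ denotes the multigraph obtained from $G$ by contracting all edges of $H$ (edges of $G$ not in $H$ whose endpoints both lie in $V(H)$ become loops). *)

From mathcomp Require Import all_boot.
Set Implicit Arguments. Unset Strict Implicit. Unset Printing Implicit Defensive.

(* A finite multigraph is given inside ambient finite types V (vertices) and
   E (edges) with an endpoint map ends : E -> V * V (loops and parallel edges
   allowed), by a vertex set VS : {set V} and an edge set ES : {set E}. *)

Section Multigraph.
Variables (V E : finType) (ends : E -> V * V).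

Definition adj (T : {set E}) : rel V :=
  fun u v => [exists e in T, (ends e == (u, v)) || (ends e == (v, u))].

Definition wf_graph (VS : {set V}) (ES : {set E}) : Prop :=
  forall e, e \in ES -> (ends e).1 \in VS /\ (ends e).2 \in VS.

Definition connected_graph (VS : {set V}) (ES : {set E}) : Prop :=
  VS != set0 /\ {in VS &, forall u v, connect (adj ES) u v}.

Definition subgraph (VH : {set V}) (EH : {set E}) (VG : {set V}) (EG : {set E}) : Prop :=
  [/\ VH \subset VG, EH \subset EG & wf_graph VH EH].

Definition acyclic (T : {set E}) : bool :=
  [forall e in T, ~~ connect (adj (T :\ e)) (ends e).1 (ends e).2].

(* spanning tree of (VS, ES): a maximal cycle-free subgraph; maximality forces
   all vertices to be included, so it is determined by its edge set, which is
   a maximal acyclic subset of ES. *)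
Definition spanning_tree (ES T : {set E}) : bool :=
  [&& T \subset ES, acyclic T & [forall e in ES :\: T, ~~ acyclic (e |: T)]].

Definition tau (ES : {set E}) : nat := #|[set T : {set E} | spanning_tree ES T]|.

End Multigraph.

(* Contraction G//H : vertices of H are merged into the new vertex None, other
   vertices v become Some v; edges are those of G not in H (edges with both
   endpoints in V(H) become loops at None). *)
Definition contr_map (V : finType) (VH : {set V}) (v : V) : option V :=
  if v \in VH then None else Some v.

Definition contr_ends (V E : finType) (ends : E -> V * V) (VH : {set V})
  (e : E) : option V * option V :=
  (contr_map VH (ends e).1, contr_map VH (ends e).2).

Definition contr_verts (V : finType) (VG VH : {set V}) : {set option V} :=
  None |: [set Some v | v in VG :\: VH].

Definition contr_edges (E : finType) (EG EH : {set E}) : {set E} := EG :\: EH.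

From mathcomp Require Import all_boot.
Set Implicit Arguments. Unset Strict Implicit. Unset Printing Implicit Defensive.

(* If T1 is a spanning tree of H and T2 one of G//H, then T1 :|: T2 is a
   spanning tree of G, and (T1, T2) is recovered from it by intersecting with
   and removing E(H).  A walk in G//H lifts to a walk in G using T2 and, inside
   the connected H, the edges of T1; conversely a walk in G projects to G//H,
   with the edges of T1 collapsing to the vertex V(H).  Hence adding the edges
   of T2 to T1 one at a time never closes a cycle, and every edge of G outside
   T1 :|: T2 closes one.  So (T1, T2) |-> T1 :|: T2 injects pairs of spanning
   trees into spanning trees of G. *)

Lemma connect_homo (T T' : finType) (e : rel T) (e' : rel T') (h : T -> T') :
  (forall x y, e x y -> connect e' (h x) (h y)) ->
  forall x y, connect e x y -> connect e' (h x) (h y).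
Proof.
move=> he x y /connectP[p]; elim: p x => [|z p IH] x /=; first by move=> _ ->.
by case/andP=> /he exz pz ly; apply: connect_trans exz (IH _ pz ly).
Qed.

Lemma setU_disjointK (T : finType) (A B C : {set T}) :
  B \subset A -> [disjoint C & A] -> (B :|: C) :&: A = B /\ (B :|: C) :\: A = C.
Proof.
move=> sBA dCA; rewrite setIUl setDUl (setIidPl sBA) (disjoint_setI0 dCA).
by rewrite (setDidPl dCA) setU0 (eqP (_ : B :\: A == set0)) ?set0U ?setD_eq0.
Qed.

Section Multigraph.
Variables (V E : finType) (ends : E -> V * V).
Local Notation adj := (adj ends).
Local Notation acyclic := (acyclic ends).

Lemma adj_sym (S : {set E}) : symmetric (adj S).
Proof.
by move=> u v; apply/existsP/existsP => -[f /andP[fS uv]]; exists f;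
  rewrite fS /= orbC.
Qed.

Lemma connect_adj_sym (S : {set E}) : connect_sym (adj S).
Proof. exact/sym_connect_sym/adj_sym. Qed.

Lemma adjP (S : {set E}) u v :
  adj S u v -> exists2 f, f \in S & ends f = (u, v) \/ ends f = (v, u).
Proof.
by case/existsP=> f /andP[fS /orP[]/eqP uv]; exists f => //; [left | right].
Qed.

Lemma adj_ends (S : {set E}) f : f \in S -> adj S (ends f).1 (ends f).2.
Proof.
by move=> fS; apply/existsP; exists f; rewrite fS -surjective_pairing eqxx.
Qed.

Lemma connect_ends (S : {set E}) f :
  f \in S -> connect (adj S) (ends f).1 (ends f).2.
Proof. by move/adj_ends/connect1. Qed.

Lemma connect_adjS (S S' : {set E}) u v :
  S \subset S' -> connect (adj S) u v -> connect (adj S') u v.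
Proof.
move=> sSS'; apply: connect_sub => x y /existsP[f /andP[fS xy]].
by apply/connect1/existsP; exists f; rewrite (subsetP sSS' _ fS) xy.
Qed.

Lemma connect_adjU1 (S : {set E}) e u v :
  connect (adj (e |: S)) u v ->
  [\/ connect (adj S) u v,
      connect (adj S) u (ends e).1 /\ connect (adj S) (ends e).2 v |
      connect (adj S) u (ends e).2 /\ connect (adj S) (ends e).1 v].
Proof.
case/connectP=> p; elim: p u => [|y p IH] u /=.
  by move=> _ ->; apply/Or31/connect0.
case/andP=> /adjP[f /setU1P[-> | fS] uy] /IH/[apply] IHy.
  have c0 := connect0 (adj S) u.
  case: uy IHy => -> /= [? | [? ?] | [? ?]];
    by [apply: Or31 | apply: Or32 | apply: Or33].
have cuy : connect (adj S) u y.
  by apply: connect1; case: uy (adj_ends fS) => -> //=; rewrite adj_sym.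
case: IHy => [? | [? ?] | [? ?]]; [apply: Or31 | apply: Or32 | apply: Or33];
  by [apply: connect_trans cuy _ | split => //; apply: connect_trans cuy _].
Qed.

Lemma acyclicU1 (F : {set E}) e : acyclic F -> e \notin F ->
  acyclic (e |: F) = ~~ connect (adj F) (ends e).1 (ends e).2.
Proof.
move=> aF eF; apply/idP/idP => [/forall_inP/(_ e (setU11 e F)) | ncF].
  by rewrite setU1K.
apply/forall_inP => f /setU1P[-> | fF]; first by rewrite setU1K.
have -> : (e |: F) :\ f = e |: (F :\ f).
  rewrite setDUl; congr (_ :|: _); apply/setDidPl.
  by rewrite disjoints1 in_set1; apply: contraNneq eF => ->.
have cF := connect_adjS (subsetDl F [set f]).
have cf := connect_ends fF.
apply: contra (forall_inP aF f fF) => /connect_adjU1[c | [c1 c2] | [c1 c2]];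
  [exact: c | case/negP: ncF..].
- rewrite connect_adj_sym in c1; rewrite connect_adj_sym in c2.
  exact: connect_trans (cF _ _ c1) (connect_trans cf (cF _ _ c2)).
- rewrite connect_adj_sym in cf.
  exact: connect_trans (cF _ _ c2) (connect_trans cf (cF _ _ c1)).
Qed.

Lemma spanning_tree_connect_ends (ES T : {set E}) f :
  spanning_tree ends ES T -> f \in ES -> connect (adj T) (ends f).1 (ends f).2.
Proof.
case/and3P=> _ aT /forall_inP maxT fES; have [fT | fT] := boolP (f \in T).
  exact: connect_ends.
have fD : f \in ES :\: T by rewrite inE fT.
by have := maxT f fD; rewrite acyclicU1 // negbK.
Qed.

Lemma spanning_tree_connect (ES T : {set E}) u v :
  spanning_tree ends ES T -> connect (adj ES) u v -> connect (adj T) u v.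
Proof.
move=> stT; apply: connect_sub => x y /adjP[f fES xy].
have := spanning_tree_connect_ends stT fES.
by case: xy => -> //=; rewrite connect_adj_sym.
Qed.

End Multigraph.

Section Contraction.
Variables (V E : finType) (ends : E -> V * V) (VH : {set V}) (EH : {set E}).
Hypothesis wfH : wf_graph ends VH EH.
Hypothesis conH : connected_graph ends VH EH.
Local Notation c := (contr_map VH).
Local Notation cends := (contr_ends ends VH).

Lemma contr_map_eq u v : c u = c v -> u = v \/ u \in VH /\ v \in VH.
Proof.
rewrite /contr_map; case: ifP => uH; case: ifP => vH //; first by right.
by case=> ->; left.
Qed.

Lemma connect_contr (T1 S : {set E}) u v : T1 \subset EH ->
  connect (adj ends (T1 :|: S)) u v -> connect (adj cends S) (c u) (c v).
Proof.
move=> sT1; apply: connect_homo => x y /adjP[f /setUP[fT1 | fS] xy].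
  have [f1 f2] := wfH (subsetP sT1 _ fT1).
  by case: xy f1 f2 => -> /= x1 y1; rewrite /contr_map x1 y1 connect0.
apply: connect1; have := adj_ends cends fS.
by case: xy; rewrite /contr_ends => -> //=; rewrite adj_sym.
Qed.

Lemma connect_uncontr (T1 T2 : {set E}) u v : spanning_tree ends EH T1 ->
  connect (adj cends T2) (c u) (c v) -> connect (adj ends (T1 :|: T2)) u v.
Proof.
move=> stT1; set S := T1 :|: T2.
have c_eq a b : c a = c b -> connect (adj ends S) a b.
  case/contr_map_eq => [-> | [aH bH]]; first exact: connect0.
  by apply/(connect_adjS (subsetUl T1 T2))/(spanning_tree_connect stT1)/conH.2.
suff lift p x w : c w = x -> path (adj cends T2) x p -> c v = last x p ->
    connect (adj ends S) w v.
  by case/connectP=> p; apply: lift.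
elim: p x w => [|z p IH] x w cw /=.
  by move=> _ cv; apply: c_eq; rewrite cw.
case/andP=> /adjP[f fT2 xz] pz lv.
have cf : connect (adj ends S) (ends f).1 (ends f).2.
  by apply: connect_ends; rewrite inE fT2 orbT.
case: xz; rewrite /contr_ends => -[c1 c2].
- apply: connect_trans (IH _ _ c2 pz lv).
  by apply: connect_trans cf; apply: c_eq; rewrite cw c1.
- rewrite connect_adj_sym in cf; apply: connect_trans (IH _ _ c1 pz lv).
  by apply: connect_trans cf; apply: c_eq; rewrite cw c2.
Qed.

Lemma acyclic_setU_contr (T1 T2 : {set E}) : T1 \subset EH ->
  acyclic ends T1 -> acyclic cends T2 -> acyclic ends (T1 :|: T2).
Proof.
move=> sT1 aT1 aT2.
suff acyc_s s : {subset s <= T2} -> acyclic ends (T1 :|: [set:: s]).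
  by rewrite -[T2]set_enum; apply: acyc_s => x; rewrite mem_enum.
elim: s => [|f s IH] sT2; first by rewrite set_nil setU0.
have sT2s : {subset s <= T2} by move=> x xs; apply: sT2; rewrite inE xs orbT.
rewrite set_cons setUCA.
have [fS | fS] := boolP (f \in T1 :|: [set:: s]).
  by rewrite (setUidPr _) ?sub1set ?IH.
rewrite acyclicU1 ?IH //.
apply: contra (forall_inP aT2 f (sT2 f (mem_head f s))) => /(connect_contr sT1).
apply: connect_adjS; apply/subsetP => x xs; rewrite !inE sT2s ?andbT.
  by apply: contraNneq fS => <-; rewrite inE xs orbT.
by rewrite inE in xs.
Qed.

Lemma spanning_tree_setU_contr (EG T1 T2 : {set E}) : EH \subset EG ->
  spanning_tree ends EH T1 -> spanning_tree cends (contr_edges EG EH) T2 ->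
  spanning_tree ends EG (T1 :|: T2).
Proof.
move=> sHG stT1 stT2; have /and3P[sT1 aT1 _] := stT1.
have /and3P[sT2 aT2 _] := stT2.
have aT := acyclic_setU_contr sT1 aT1 aT2.
apply/and3P; split=> //.
  by rewrite subUset (subset_trans sT1 sHG) (subset_trans sT2 (subsetDl _ _)).
apply/forall_inP => e; rewrite !inE negb_or => /andP[/andP[eT1 eT2] eG].
rewrite acyclicU1 ?inE ?negb_or ?eT1 // negbK.
have [eH | eH] := boolP (e \in EH).
  exact: connect_adjS (subsetUl _ _) (spanning_tree_connect_ends stT1 eH).
apply: connect_uncontr stT1 (spanning_tree_connect_ends stT2 _).
by rewrite inE eH.
Qed.

End Contraction.

Theorem lemma3p1 (V E : finType) (ends : E -> V * V)
  (VG : {set V}) (EG : {set E}) (VH : {set V}) (EH : {set E}) :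
  wf_graph ends VG EG ->
  connected_graph ends VG EG ->
  subgraph ends VH EH VG EG ->
  connected_graph ends VH EH ->
  tau ends EH * tau (contr_ends ends VH) (contr_edges EG EH) <= tau ends EG.
Proof.
move=> _ _ [_ sHG wfH] conH; rewrite /tau -cardsX.
set P := setX _ _.
have splitP p : p \in P -> p.1 \subset EH /\ [disjoint p.2 & EH].
  rewrite !inE => /andP[/and3P[-> _ _] /and3P[sT2 _ _]]; split=> //.
  by rewrite disjoints_subset (subset_trans sT2) // /contr_edges setDE subsetIr.
have inj_union : {in P &, injective (fun p => p.1 :|: p.2)}.
  move=> [S1 S2] [T1 T2] /splitP[/= sS1 dS2] /splitP[/= sT1 dT2] /= eqST.
  have [eS1 eS2] := setU_disjointK sS1 dS2.
  have [eT1 eT2] := setU_disjointK sT1 dT2.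
  by congr pair; [rewrite -eS1 -eT1 | rewrite -eS2 -eT2]; rewrite eqST.
rewrite -(card_in_imset inj_union); apply: subset_leq_card.
apply/subsetP => T /imsetP[[T1 T2] /setXP[]]; rewrite !inE => stT1 stT2 -> /=.
exact: (spanning_tree_setU_contr wfH conH sHG stT1 stT2).
Qed.
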